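(* Let $w(x,y)=x^{a_1}y^{b_1}\cdots x^{a_k}y^{b_k}\in F_2$ with all integers $a_i\neq0$, $b_i\neq 0$, and put $A=\sum_{i=1}^k a_i$, $B=\sum_{i=1}^k b_i$, $A_i=\sum_{j\le i}a_j$, $B_i=\sum_{j<i}b_j$. If $A\neq 0$ and the word map $w:\mathrm{SL}(2,\mathbb{C})^2\to \mathrm{SL}(2,\mathbb{C})$ is not surjective, then $\sum_{i=1}^k b_i\gamma^{2A_i}=0$ for every root $\gamma$ of $z^A+1=0$. If $B\neq 0$ and the word map $w$ is not surjective, then $\sum_{i=1}^k a_i\delta^{2B_i}=0$ for every root $\delta$ of $z^B+1=0$.
   Context: The word map sends $(X,Y)\in\mathrm{SL}(2,\mathbb{C})^2$ to $X^{a_1}Y^{b_1}\cdots X^{a_k}Y^{b_k}$. *)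

From HB Require Import structures.
From mathcomp Require Import all_boot all_order all_algebra.
From mathcomp.real_closed Require Import complex.
From mathcomp Require Import Rstruct.
Set Implicit Arguments. Unset Strict Implicit. Unset Printing Implicit Defensive.
Import Order.TTheory GRing.Theory Num.Theory.
Local Open Scope ring_scope.

Notation CC := (Rdefinitions.R[i]).

(* A word w = x^{a_1} y^{b_1} ... x^{a_k} y^{b_k} is encoded by the sequence
   of exponent pairs [:: (a_1,b_1); ...; (a_k,b_k)]. *)
Definition word_map (w : seq (int * int)) (X Y : 'M[CC]_2) : 'M[CC]_2 :=
  \prod_(p <- w) (X ^ p.1 * Y ^ p.2).

Definition SL2 (X : 'M[CC]_2) : Prop := \det X = 1.

Definition word_map_surjective (w : seq (int * int)) : Prop :=
  forall Z : 'M[CC]_2, SL2 Z -> exists X Y, SL2 X /\ SL2 Y /\ word_map w X Y = Z.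

Definition sumA (w : seq (int * int)) : int := \sum_(p <- w) p.1.
Definition sumB (w : seq (int * int)) : int := \sum_(p <- w) p.2.
(* 0-based i:  A_i = sum_{j <= i} a_j ,  B_i = sum_{j < i} b_j *)
Definition partA (w : seq (int * int)) (i : nat) : int := sumA (take i.+1 w).
Definition partB (w : seq (int * int)) (i : nat) : int := sumB (take i w).

From HB Require Import structures.
From mathcomp Require Import all_boot all_order all_algebra.
From mathcomp.real_closed Require Import complex.
From mathcomp Require Import Rstruct.
From mathcomp Require Import ring.
Set Implicit Arguments. Unset Strict Implicit. Unset Printing Implicit Defensive.
Import Order.TTheory GRing.Theory Num.Theory.
Local Open Scope ring_scope.

(* Every matrix of SL(2,C) is conjugate to an upper triangular [upmx a b] =
   [[a, b], [0, a^-1]], and word maps commute with conjugation.  When A != 0 the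
   values w(X, 1) = X^A already give every [upmx a b] except those with a = -1:
   diagonalizable ones are A-th powers of diagonal matrices, unipotent ones A-th
   powers of unipotent ones.  The remaining ones come from
     w(upmx g 0, upmx 1 t) = upmx g^A (t g^-A sum_i b_i g^(2 A_i)),
   which for g^A = -1 is [upmx (-1) b] with b arbitrary as soon as the sum is
   nonzero.  The case B != 0 is the same with the roles of x and y exchanged. *)

Section WordEval.

Variable R : unitRingType.

Definition word_eval (w : seq (int * int)) (x y : R) : R :=
  \prod_(p <- w) (x ^ p.1 * y ^ p.2).

Lemma word_eval_nil x y : word_eval [::] x y = 1.
Proof. exact: big_nil. Qed.

Lemma word_eval_cons p w x y :
  word_eval (p :: w) x y = x ^ p.1 * y ^ p.2 * word_eval w x y.
Proof. exact: big_cons. Qed.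

Lemma word_eval_y1 w x : x \is a GRing.unit -> word_eval w x 1 = x ^ sumA w.
Proof.
move=> ux; elim: w => [|p w IHw]; first by rewrite word_eval_nil /sumA big_nil.
by rewrite word_eval_cons IHw exp1rz mulr1 /sumA big_cons exprzDr.
Qed.

Lemma word_eval_x1 w y : y \is a GRing.unit -> word_eval w 1 y = y ^ sumB w.
Proof.
move=> uy; elim: w => [|p w IHw]; first by rewrite word_eval_nil /sumB big_nil.
by rewrite word_eval_cons IHw exp1rz mul1r /sumB big_cons exprzDr.
Qed.

Variable u : R.
Hypothesis uu : u \is a GRing.unit.

(* [x] need not be a unit: otherwise neither side is one, and [^-1] is the
   identity on non-units. *)
Lemma conjrV x : (u * x / u)^-1 = u * x^-1 / u.
Proof.
have [ux | nux] := boolP (x \is a GRing.unit).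
  by rewrite !invrM ?unitrV ?unitrMr // invrK mulrA.
have nuxu : u * x / u \isn't a GRing.unit by rewrite unitrMl ?unitrV // unitrMr.
by rewrite (invr_out nux) (invr_out nuxu).
Qed.

Lemma conjrX x (n : nat) : (u * x / u) ^+ n = u * x ^+ n / u.
Proof.
elim: n => [|n IHn]; first by rewrite !expr0 mulr1 mulrV.
by rewrite exprS IHn exprS !mulrA mulrVK.
Qed.

Lemma conjrXz x (z : int) : (u * x / u) ^ z = u * x ^ z / u.
Proof. by case: z => n; rewrite /exprz conjrX // conjrV. Qed.

Lemma word_eval_conj w x y :
  word_eval w (u * x / u) (u * y / u) = u * word_eval w x y / u.
Proof.
elim: w => [|p w IHw]; first by rewrite !word_eval_nil mulr1 mulrV.
by rewrite !word_eval_cons IHw !conjrXz !mulrA !mulrVK.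
Qed.

End WordEval.

Section UpperTriangular.

Variable F : fieldType.

Definition mx2 (a b c d : F) : 'M[F]_2 :=
  \matrix_(i < 2, j < 2) if i == 0 then (if j == 0 then a else b)
                         else (if j == 0 then c else d).

Lemma mx2E (M : 'M[F]_2) : M = mx2 (M 0 0) (M 0 1) (M 1 0) (M 1 1).
Proof.
apply/matrixP => i j; rewrite !mxE.
by case: i => [[|[|//]] ?]; case: j => [[|[|//]] ?]; congr (M _ _); apply/val_inj.
Qed.

Lemma mx2_mul a b c d a' b' c' d' :
  mx2 a b c d * mx2 a' b' c' d' =
  mx2 (a * a' + b * c') (a * b' + b * d') (c * a' + d * c') (c * b' + d * d').
Proof.
apply/matrixP => i j; rewrite !mxE !big_ord_recl big_ord0 !mxE /=.
by case: i => [[|[|//]] ?]; case: j => [[|[|//]] ?]; rewrite /= addr0.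
Qed.

Lemma det_mx2 a b c d : \det (mx2 a b c d) = a * d - b * c.
Proof.
rewrite (expand_det_row _ ord0) !big_ord_recl big_ord0 /cofactor !det_mx11 !mxE /=.
by rewrite expr0 expr1 addr0 !mul1r mulN1r mulrN.
Qed.

Definition upmx (a b : F) : 'M[F]_2 := mx2 a b 0 a^-1.

Lemma upmx_mul a b a' b' : upmx a b * upmx a' b' = upmx (a * a') (a * b' + b / a').
Proof. by rewrite /upmx mx2_mul invfM; congr mx2; ring. Qed.

Lemma upmx10 : upmx 1 0 = 1.
Proof.
apply/matrixP => i j; rewrite /upmx invr1 !mxE.
by case: i => [[|[|//]] ?]; case: j => [[|[|//]] ?].
Qed.

Lemma det_upmx a b : a != 0 -> \det (upmx a b) = 1.
Proof. by move=> a0; rewrite det_mx2 mulr0 subr0 mulfV. Qed.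

Lemma upmx_unit a b : a != 0 -> upmx a b \is a GRing.unit.
Proof. by move=> a0; rewrite -[_ \is a _]/(_ \in unitmx) unitmxE det_upmx ?unitr1. Qed.

Lemma upmxV a b : a != 0 -> (upmx a b)^-1 = upmx a^-1 (- b).
Proof.
move=> a0; apply: (mulrI (upmx_unit b a0)); rewrite mulrV ?upmx_unit //.
by rewrite upmx_mul invrK mulfV // mulrN mulrC addNr upmx10.
Qed.

Lemma upmx_diagX a (z : int) : a != 0 -> upmx a 0 ^ z = upmx (a ^ z) 0.
Proof.
move=> a0; have upmxX n : upmx a 0 ^+ n = upmx (a ^+ n) 0.
  elim: n => [|n IHn]; first by rewrite !expr0 upmx10.
  by rewrite !exprS IHn upmx_mul mul0r mulr0 addr0.
by case: z => n; rewrite /exprz upmxX // upmxV ?oppr0 ?expf_neq0.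
Qed.

Lemma upmx_unipX b (z : int) : upmx 1 b ^ z = upmx 1 (b * z%:~R).
Proof.
have upmxX n : upmx 1 b ^+ n = upmx 1 (b * n%:R).
  elim: n => [|n IHn]; first by rewrite !expr0 mulr0 upmx10.
  by rewrite !exprS IHn upmx_mul mul1r divr1 -natr1; congr upmx; ring.
by case: z => n; rewrite /exprz upmxX // upmxV ?oner_neq0 // invr1 NegzE mulrN.
Qed.

End UpperTriangular.

Lemma sumA_cons p w : sumA (p :: w) = p.1 + sumA w.
Proof. exact: big_cons. Qed.

Lemma sumB_cons p w : sumB (p :: w) = p.2 + sumB w.
Proof. exact: big_cons. Qed.

Lemma partA_cons0 p w : partA (p :: w) 0 = p.1.
Proof. by rewrite /partA /= take0 sumA_cons /sumA big_nil addr0. Qed.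

Lemma partA_consS p w i : partA (p :: w) i.+1 = p.1 + partA w i.
Proof. exact: sumA_cons. Qed.

Lemma partB_cons0 p w : partB (p :: w) 0 = 0.
Proof. exact: big_nil. Qed.

Lemma partB_consS p w i : partB (p :: w) i.+1 = p.2 + partB w i.
Proof. exact: sumB_cons. Qed.

Section TwistedSums.

Variable F : fieldType.
Implicit Types (l : F) (w : seq (int * int)).

Definition twisted_sumB l w : F :=
  \sum_(i < size w) ((nth (0, 0) w i).2)%:~R * l ^ (2 * partA w i).

Definition twisted_sumA l w : F :=
  \sum_(i < size w) ((nth (0, 0) w i).1)%:~R * l ^ (2 * partB w i).

Lemma expfz_double l (z : int) : l != 0 -> l ^ (2 * z) = l ^ z * l ^ z.
Proof. by move=> l0; rewrite -expfzDr // mulrDl mul1r. Qed.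

Lemma twisted_sumB_cons l p w : l != 0 ->
  twisted_sumB l (p :: w) = (l ^ p.1 * l ^ p.1) * (p.2%:~R + twisted_sumB l w).
Proof.
move=> l0; rewrite /twisted_sumB /= big_ord_recl /= partA_cons0 expfz_double //.
rewrite mulrDr mulrC; congr (_ + _); rewrite mulr_sumr; apply: eq_bigr => i _.
by rewrite partA_consS mulrDr expfzDr // !expfz_double //; ring.
Qed.

Lemma twisted_sumA_cons l p w : l != 0 ->
  twisted_sumA l (p :: w) = p.1%:~R + (l ^ p.2 * l ^ p.2) * twisted_sumA l w.
Proof.
move=> l0; rewrite /twisted_sumA /= big_ord_recl /= partB_cons0 mulr0 expr0z mulr1.
congr (_ + _); rewrite mulr_sumr; apply: eq_bigr => i _.
by rewrite partB_consS mulrDr expfzDr // !expfz_double //; ring.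
Qed.

Lemma word_eval_diag_unip w l b : l != 0 ->
  word_eval w (upmx l 0) (upmx 1 b) =
  upmx (l ^ sumA w) (b / l ^ sumA w * twisted_sumB l w).
Proof.
move=> l0; elim: w => [|p w IHw].
  by rewrite word_eval_nil /twisted_sumB big_ord0 mulr0 /sumA big_nil expr0z upmx10.
have lp0 : l ^ p.1 != 0 by rewrite expfz_neq0.
have lw0 : l ^ sumA w != 0 by rewrite expfz_neq0.
rewrite word_eval_cons IHw upmx_diagX // upmx_unipX !upmx_mul mulr1 sumA_cons.
rewrite twisted_sumB_cons // expfzDr //; congr upmx.
by rewrite mul0r addr0; field; apply/andP.
Qed.

Lemma word_eval_unip_diag w l b : l != 0 ->
  word_eval w (upmx 1 b) (upmx l 0) =
  upmx (l ^ sumB w) (b / l ^ sumB w * twisted_sumA l w).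
Proof.
move=> l0; elim: w => [|p w IHw].
  by rewrite word_eval_nil /twisted_sumA big_ord0 mulr0 /sumB big_nil expr0z upmx10.
have lp0 : l ^ p.2 != 0 by rewrite expfz_neq0.
have lw0 : l ^ sumB w != 0 by rewrite expfz_neq0.
rewrite word_eval_cons IHw upmx_diagX // upmx_unipX !upmx_mul mul1r sumB_cons.
rewrite twisted_sumA_cons // expfzDr //; congr upmx.
by rewrite mulr0 add0r; field; apply/andP.
Qed.

End TwistedSums.

Section WordImage.

Variable F : fieldType.
Implicit Types (w : seq (int * int)) (X Y Z P : 'M[F]_2) (a b : F).

Definition sl2_word_image w Z : Prop :=
  exists X Y, \det X = 1 /\ \det Y = 1 /\ word_eval w X Y = Z.

Lemma det1_unit X : \det X = 1 -> X \is a GRing.unit.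
Proof. by move=> dX; rewrite -[_ \is a _]/(_ \in unitmx) unitmxE dX unitr1. Qed.

Lemma det_conj P X : P \is a GRing.unit -> \det (P * X / P) = \det X.
Proof.
move=> uP; rewrite [P * X / P]/(P *m X *m invmx P) !det_mulmx detV mulrAC.
by rewrite mulfV ?mul1r // -unitfE -unitmxE.
Qed.

Lemma sl2_word_image_conj w P Z : P \is a GRing.unit ->
  sl2_word_image w Z -> sl2_word_image w (P * Z / P).
Proof.
move=> uP [X [Y [dX [dY <-]]]]; exists (P * X / P), (P * Y / P).
by rewrite !det_conj // word_eval_conj.
Qed.

Lemma sl2_word_image_powA w X : \det X = 1 -> sl2_word_image w (X ^ sumA w).
Proof.
by move=> dX; exists X, 1; rewrite det1 word_eval_y1 ?det1_unit.
Qed.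

Lemma sl2_word_image_powB w Y : \det Y = 1 -> sl2_word_image w (Y ^ sumB w).
Proof.
by move=> dY; exists 1, Y; rewrite det1 word_eval_x1 ?det1_unit.
Qed.

Lemma upmx_conj_diag a b : a != 0 -> a ^+ 2 != 1 ->
  exists2 Q, Q \is a GRing.unit & upmx a b = Q * upmx a 0 / Q.
Proof.
move=> a0 a2; have k0 : 1 - a ^+ 2 != 0 by rewrite subr_eq0 eq_sym.
exists (upmx 1 (b * a / (1 - a ^+ 2))); first exact: upmx_unit (oner_neq0 _).
rewrite upmxV ?oner_neq0 // !upmx_mul invr1 mul1r mulr1 mulr0 add0r divr1.
by congr (upmx a _); field; apply/andP.
Qed.

End WordImage.

Section ClosedField.

Variable F : numClosedFieldType.
Implicit Types (w : seq (int * int)) (X Z : 'M[F]_2) (a b g d : F).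

Lemma exprz_root (N : int) a : N != 0 -> a != 0 -> exists2 l, l != 0 & l ^ N = a.
Proof.
move=> N0 a0; case: N N0 => n N0.
  have n0 : (0 < n)%N by rewrite lt0n; apply: contraNneq N0 => ->.
  exists (n.-root a); last exact: rootCK.
  by rewrite rootC_eq0.
exists (n.+1.-root a)^-1; first by rewrite invr_eq0 rootC_eq0.
by rewrite exprz_inv NegzE opprK [_ ^ _]rootCK.
Qed.

Lemma sl2_conj_upmx Z : \det Z = 1 ->
  exists P a b, [/\ P \is a GRing.unit, a != 0 & Z = P * upmx a b / P].
Proof.
rewrite (mx2E Z) det_mx2; move: (Z 0 0) (Z 0 1) (Z 1 0) (Z 1 1) => a b c d dZ.
have [c0 | c0] := eqVneq c 0.
  have a0 : a != 0.
    by rewrite -unitfE; apply/unitrPr; exists d; rewrite -dZ c0 mulr0 subr0.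
  exists 1, a, b; split; rewrite ?unitr1 // mul1r invr1 mulr1 /upmx c0; congr mx2.
  by apply: (mulfI a0); rewrite mulfV // -dZ c0 mulr0 subr0.
have [l lE] := @solve_monicpoly F 2 (fun i => if i == 0%N then -1 else a + d) isT.
rewrite !big_ord_recl big_ord0 /= expr0 expr1 mulr1 addr0 in lE.
(* [l] is an eigenvalue of [Z]: [l ^+ 2 = (a + d) l - 1]; [l - d, c] is an eigenvector. *)
have l_inv : l * (a + d - l) = 1 by rewrite mulrBr -expr2 lE mulrC; ring.
have l0 : l != 0 by rewrite -unitfE; apply/unitrPr; exists (a + d - l).
set P := mx2 (l - d) 1 c 0.
have uP : P \is a GRing.unit.
  rewrite -[_ \is a _]/(_ \in unitmx) unitmxE det_mx2 unitfE.
  by rewrite mulr0 mul1r sub0r oppr_eq0.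
exists P, l, 1; split => //; apply: (canRL (mulrK uP)).
have lV : l^-1 = a + d - l by apply: (mulfI l0); rewrite mulfV.
rewrite /P /upmx !mx2_mul lV; congr mx2; try ring.
by rewrite mulr0 addr0 mulrBl -expr2 lE -dZ; ring.
Qed.

Lemma sl2_word_image_all w (N : int) : N != 0 ->
  (forall X, \det X = 1 -> sl2_word_image w (X ^ N)) ->
  (forall b, sl2_word_image w (upmx (-1) b)) ->
  forall Z, \det Z = 1 -> sl2_word_image w Z.
Proof.
move=> N0 powN hitN1 Z /sl2_conj_upmx [P [a [b [uP a0 ->]]]].
apply: sl2_word_image_conj => //.
have N0F : N%:~R != 0 :> F by rewrite intr_eq0.
have [a1 | a1] := boolP (a ^+ 2 == 1).
  move: a1; rewrite sqrf_eq1 => /orP[/eqP -> | /eqP ->]; last exact: hitN1.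
  by rewrite -(divfK N0F b) -upmx_unipX; apply/powN/det_upmx/oner_neq0.
have [Q uQ ->] := upmx_conj_diag b a0 a1.
have [l l0 <-] := exprz_root N0 a0.
by apply: sl2_word_image_conj => //; rewrite -upmx_diagX //; apply/powN/det_upmx.
Qed.

Lemma exprz_eqN1_neq0 (g : F) (z : int) : g ^ z = -1 -> g != 0.
Proof.
move=> gz; apply/eqP => g0; have : 0 <= g ^ z by rewrite g0 exp0rz; case: (z == 0).
by rewrite gz ler0N1.
Qed.

Lemma sl2_word_image_upmxN1_twistB w g b : g ^ sumA w = -1 ->
  twisted_sumB g w != 0 -> sl2_word_image w (upmx (-1) b).
Proof.
move=> gA S0; have g0 := exprz_eqN1_neq0 gA.
exists (upmx g 0), (upmx 1 (- b / twisted_sumB g w)).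
rewrite !det_upmx ?oner_neq0 // word_eval_diag_unip // gA invrN1.
by split=> //; split=> //; congr (upmx _ _); field.
Qed.

Lemma sl2_word_image_upmxN1_twistA w d b : d ^ sumB w = -1 ->
  twisted_sumA d w != 0 -> sl2_word_image w (upmx (-1) b).
Proof.
move=> dB S0; have d0 := exprz_eqN1_neq0 dB.
exists (upmx 1 (- b / twisted_sumA d w)), (upmx d 0).
rewrite !det_upmx ?oner_neq0 // word_eval_unip_diag // dB invrN1.
by split=> //; split=> //; congr (upmx _ _); field.
Qed.

End ClosedField.

Lemma surjective_of_sl2_word_image w :
  (forall Z : 'M[CC]_2, \det Z = 1 -> sl2_word_image w Z) -> word_map_surjective w.
Proof. by []. Qed.

Theorem lemma7p2 (w : seq (int * int)) :
  (forall p, p \in w -> p.1 != 0 /\ p.2 != 0) ->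
  (sumA w != 0 -> ~ word_map_surjective w ->
     forall g : CC, g ^ (sumA w) + 1 = 0 ->
       \sum_(i < size w) ((nth (0, 0) w i).2)%:~R * g ^ (2 * partA w i) = 0) /\
  (sumB w != 0 -> ~ word_map_surjective w ->
     forall d : CC, d ^ (sumB w) + 1 = 0 ->
       \sum_(i < size w) ((nth (0, 0) w i).1)%:~R * d ^ (2 * partB w i) = 0).
Proof.
move=> _; split=> [A0 not_onto g gA | B0 not_onto d dB];
  apply/eqP/negPn/negP => S0; apply/not_onto/surjective_of_sl2_word_image.
- apply: (sl2_word_image_all A0); first exact: sl2_word_image_powA.
  move=> b; apply: (sl2_word_image_upmxN1_twistB _ (g := g)) S0.
  by apply: (addIr 1); rewrite gA addNr.
- apply: (sl2_word_image_all B0); first exact: sl2_word_image_powB.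
  move=> b; apply: (sl2_word_image_upmxN1_twistA _ (d := d)) S0.
  by apply: (addIr 1); rewrite dB addNr.
Qed.
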